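(* Let $\mu>1$, $\gamma=\mu\gamma^N_1$, and let $(\rho_k)_{k\ge1}$ be an increasing positive sequence with $K_{4/3}<\infty$. There exist constants $A_1<\infty$ and $\delta_0>0$ such that for all $N\ge3$, all $0<\delta<\delta_0$ and all $z\in C_\delta$, $$\big|\widetilde G_N(z)-F_0(z)\big|\le A_1\delta^4,\qquad\text{where } F_0(z)=\tfrac12\sum_{k=0}^{N-1}\lambda_{k,N}|z_k|^2.$$
   Context: Indices modulo $N$; $F_{\gamma,N}(x)=\sum_{i=0}^{N-1}(\tfrac14x_i^4-\tfrac12x_i^2)+\tfrac\gamma4\sum_{i=0}^{N-1}(x_i-x_{i+1})^2$; $\gamma^N_1=\frac1{2\sin^2(\pi/N)}$; $G_N=N^{-1}F_{\gamma,N}$; $\lambda_{k,N}=-1+2\gamma\sin^2(k\pi/N)$. $\omega=e^{2\pi i/N}$; $\widehat{\mathbb{R}}^N=\{z\in\mathbb{C}^N:z_k=\overline{z_{N-k}}\}$; $x_j(Nz)=\sum_{k=0}^{N-1}\omega^{jk}z_k$; $\widetilde G_N(z)=G_N(x(Nz))$, which equals $\tfrac12\sum_k\lambda_{k,N}|z_k|^2+\frac1{4N}\|x(Nz)\|_4^4$. Given increasing positive $(\rho_k)_{k\ge1}$: $r_{0,N}=1$, $r_{k,N}=r_{N-k,N}=\rho_k$ ($1\le k\le\lfloor N/2\rfloor$), $K_p=(\sum_{k\ge1}\rho_k^p/k^p)^{1/p}$, $C_\delta=\{z\in\widehat{\mathbb{R}}^N:|z_k|\le\delta r_{k,N}/\sqrt{|\lambda_{k,N}|},\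 0\le k\le N-1\}$. *)

From Stdlib Require Import Reals Lra Lia.
Open Scope R_scope.

Fixpoint rsum (n : nat) (f : nat -> R) : R :=
  match n with
  | O => 0
  | S m => rsum m f + f m
  end.

Definition F_energy (gamma : R) (N : nat) (x : nat -> R) : R :=
  rsum N (fun i => / 4 * x i ^ 4 - / 2 * x i ^ 2)
  + gamma / 4 * rsum N (fun i => (x i - x ((S i) mod N)%nat) ^ 2).

Definition gamma1 (N : nat) : R := / (2 * (sin (PI / INR N)) ^ 2).

Definition G_N (gamma : R) (N : nat) (x : nat -> R) : R := / INR N * F_energy gamma N x.

Definition lam (gamma : R) (N k : nat) : R := -1 + 2 * gamma * (sin (INR k * PI / INR N)) ^ 2.

(* A complex vector z in C^N is given by its real part zr and imaginary part zi,
   indexed by 0..N-1.  Membership in \widehat{R}^N : z_k = conj(z_{N-k}) (indices mod N). *)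
Definition in_hatR (N : nat) (zr zi : nat -> R) : Prop :=
  forall k : nat, (k < N)%nat ->
    zr k = zr ((N - k) mod N)%nat /\ zi k = - zi ((N - k) mod N)%nat.

(* x_j(Nz) = sum_k omega^{jk} z_k, omega = e^{2 pi i/N}.  For z in \widehat{R}^N this
   sum is real; we take its real part:  Re(omega^{jk} z_k) = cos(.) zr_k - sin(.) zi_k. *)
Definition xofz (N : nat) (zr zi : nat -> R) (j : nat) : R :=
  rsum N (fun k => cos (2 * PI * INR j * INR k / INR N) * zr k
                 - sin (2 * PI * INR j * INR k / INR N) * zi k).

Definition Gtilde (gamma : R) (N : nat) (zr zi : nat -> R) : R :=
  G_N gamma N (xofz N zr zi).

Definition cabs2 (zr zi : nat -> R) (k : nat) : R := zr k ^ 2 + zi k ^ 2.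

Definition F0 (gamma : R) (N : nat) (zr zi : nat -> R) : R :=
  / 2 * rsum N (fun k => lam gamma N k * cabs2 zr zi k).

Definition rkN (rho : nat -> R) (N k : nat) : R :=
  if Nat.eqb k 0 then 1
  else if Nat.leb k (N / 2) then rho k else rho (N - k)%nat.

Definition in_Cdelta (gamma : R) (rho : nat -> R) (N : nat) (delta : R)
    (zr zi : nat -> R) : Prop :=
  in_hatR N zr zi /\
  forall k : nat, (k < N)%nat ->
    sqrt (cabs2 zr zi k) <= delta * rkN rho N k / sqrt (Rabs (lam gamma N k)).

Definition K_finite (p : R) (rho : nat -> R) : Prop :=
  exists l : R, Un_cv (fun n => sum_f_R0 (fun k => Rpower (rho (S k) / INR (S k)) p) n) l.

From Stdlib Require Import Reals Lra Lia ZArith.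
Open Scope R_scope.

(* For z ∈ \widehat{R}^N the vector x = x(Nz) is real, and Parseval's
      identity, applied to z and to the discrete derivative x_j - x_{j+1} (the transform of
      (1 - ω^k) z_k), shows that the quadratic part of G̃_N(z) is F_0(z).  Hence
      G̃_N(z) - F_0(z) = (4N)^{-1} Σ_j x_j^4 >= 0  (quartic_energy_identity).
   2. Fourth moment.  Expanding |X_j|^4 and summing over j with the orthogonality of the
      characters gives Σ_j |X_j|^4 <= N Σ_{a,b,c,d} Q(a,b,c,d) |z_a||z_b||z_c||z_d| with Q a
      sum of two indicators of linear congruences mod N  (dft_fourth_moment).
   3. Young-type inequality.  A nonnegative kernel whose one-index sums are <= 1 satisfies
      Σ Q F_a F_b F_c F_d <= (Σ F^{4/3})^3, by AM-GM  (young4, fourth_kernel_young).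
   4. Spectral weights.  λ_{m,N} >= (μ-1) m^2 / 9 for 1 <= m <= N/2, so C_δ has radius
      δ a_k at mode k with Σ_k a_k^{4/3} <= T uniformly in N, using K_{4/3} < ∞
      (weight_sum_bound).
   Together: |G̃_N - F_0| <= (4N)^{-1} 2N (δ^{4/3} T)^3 = (T^3/2) δ^4. *)

Lemma rsum_ext n f g : (forall k, (k < n)%nat -> f k = g k) -> rsum n f = rsum n g.
Proof.
  induction n as [|n IH]; intros H; simpl; [reflexivity|].
  rewrite IH by (intros; apply H; lia). rewrite H by lia; reflexivity.
Qed.

Lemma rsum_le n f g : (forall k, (k < n)%nat -> f k <= g k) -> rsum n f <= rsum n g.
Proof.
  induction n as [|n IH]; intros H; simpl; [lra|].
  pose proof (IH (fun k Hk => H k ltac:(lia))). pose proof (H n ltac:(lia)). lra.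
Qed.

Lemma rsum_const n c : rsum n (fun _ => c) = INR n * c.
Proof. induction n as [|n IH]; simpl rsum; [simpl; ring|]. rewrite IH, S_INR; ring. Qed.

Lemma rsum_nonneg n f : (forall k, (k < n)%nat -> 0 <= f k) -> 0 <= rsum n f.
Proof. intros H. rewrite <- (Rmult_0_r (INR n)), <- rsum_const. now apply rsum_le. Qed.

Lemma rsum_plus n f g : rsum n (fun k => f k + g k) = rsum n f + rsum n g.
Proof. induction n as [|n IH]; simpl; [lra|]; rewrite IH; lra. Qed.

Lemma rsum_minus n f g : rsum n (fun k => f k - g k) = rsum n f - rsum n g.
Proof. induction n as [|n IH]; simpl; [lra|]; rewrite IH; lra. Qed.

Lemma rsum_scal n c f : rsum n (fun k => c * f k) = c * rsum n f.
Proof. induction n as [|n IH]; simpl; [ring|]; rewrite IH; ring. Qed.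

Lemma rsum_opp n f : rsum n (fun k => - f k) = - rsum n f.
Proof. induction n as [|n IH]; simpl; [ring|]; rewrite IH; ring. Qed.

Lemma rsum_mult n m f g :
  rsum n f * rsum m g = rsum n (fun k => rsum m (fun l => f k * g l)).
Proof.
  induction n as [|n IH]; simpl; [ring|].
  rewrite Rmult_plus_distr_r, IH, <- rsum_scal. reflexivity.
Qed.

Lemma rsum_swap n m f :
  rsum n (fun k => rsum m (fun l => f k l)) = rsum m (fun l => rsum n (fun k => f k l)).
Proof.
  induction n as [|n IH]; simpl.
  - rewrite rsum_const; ring.
  - rewrite IH, <- rsum_plus. reflexivity.
Qed.

Lemma rsum_shift n f : rsum (S n) f = f 0%nat + rsum n (fun k => f (S k)).
Proof. induction n as [|n IH]; simpl in *; [ring|]. rewrite IH; ring. Qed.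

Lemma rsum_rev n f : rsum n f = rsum n (fun k => f (n - 1 - k)%nat).
Proof.
  induction n as [|n IH]; [reflexivity|].
  rewrite (rsum_shift n (fun k => f (S n - 1 - k)%nat)). simpl rsum at 1.
  rewrite IH, Rplus_comm. replace (S n - 1 - 0)%nat with n by lia.
  f_equal. apply rsum_ext; intros; f_equal; lia.
Qed.

Lemma rsum_reflect N f : (0 < N)%nat -> rsum N f = rsum N (fun k => f ((N - k) mod N)%nat).
Proof.
  intros HN. destruct N as [|M]; [lia|]. rewrite !rsum_shift. f_equal.
  - rewrite Nat.sub_0_r, Nat.Div0.mod_same. reflexivity.
  - rewrite rsum_rev. apply rsum_ext; intros k Hk. f_equal.
    rewrite Nat.mod_small by lia. lia.
Qed.

Lemma rsum_delta n k g :
  (k < n)%nat -> rsum n (fun l => if Nat.eq_dec k l then g l else 0) = g k.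
Proof.
  induction n as [|n IH]; intros H; [lia|]. simpl. destruct (Nat.eq_dec k n) as [->|Hne].
  - rewrite (rsum_ext _ _ (fun _ => 0)), rsum_const; [ring|].
    intros l Hl; destruct (Nat.eq_dec n l); [lia|auto].
  - rewrite IH by lia. ring.
Qed.

Lemma rsum_telescope n g : rsum n (fun j => g (S j) - g j) = g n - g 0%nat.
Proof. induction n as [|n IH]; simpl; [ring|]. rewrite IH; ring. Qed.

Lemma rsum_sum_f_R0 n f : rsum (S n) f = sum_f_R0 f n.
Proof. induction n as [|n IH]; simpl in *; [ring|]. rewrite <- IH. reflexivity. Qed.

Lemma rsum_indicator_le_1 n (b : nat -> bool) :
  (forall d d', (d < d' < n)%nat -> b d = true -> b d' = true -> False) ->
  rsum n (fun d => if b d then 1 else 0) <= 1.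
Proof.
  induction n as [|n IH]; intros H; simpl; [lra|]. destruct (b n) eqn:E.
  - rewrite (rsum_ext _ _ (fun _ => 0)), rsum_const; [lra|].
    intros k Hk. destruct (b k) eqn:E'; auto. exfalso; apply (H k n); auto.
  - rewrite Rplus_0_r. apply IH. intros d d' Hd. apply H. lia.
Qed.

Lemma sin_period_Z x z : sin (x + 2 * IZR z * PI) = sin x.
Proof.
  destruct z as [|p|p].
  - simpl. f_equal; ring.
  - rewrite <- (positive_nat_Z p), <- INR_IZR_INZ. apply sin_period.
  - rewrite <- Pos2Z.opp_pos, opp_IZR, <- (positive_nat_Z p), <- INR_IZR_INZ.
    rewrite <- (sin_period (x + 2 * - INR (Pos.to_nat p) * PI) (Pos.to_nat p)). f_equal; ring.
Qed.

Lemma cos_period_Z x z : cos (x + 2 * IZR z * PI) = cos x.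
Proof.
  destruct z as [|p|p].
  - simpl. f_equal; ring.
  - rewrite <- (positive_nat_Z p), <- INR_IZR_INZ. apply cos_period.
  - rewrite <- Pos2Z.opp_pos, opp_IZR, <- (positive_nat_Z p), <- INR_IZR_INZ.
    rewrite <- (cos_period (x + 2 * - INR (Pos.to_nat p) * PI) (Pos.to_nat p)). f_equal; ring.
Qed.

(* Sums of cos (j th) and sin (j th) over a full period N th ∈ 2πZ vanish when
   sin (th/2) <> 0: multiplying by 2 sin (th/2) makes them telescope. *)
Lemma trig_sums_vanish N th m : INR N * th = 2 * IZR m * PI -> sin (th / 2) <> 0 ->
  rsum N (fun j => cos (INR j * th)) = 0 /\ rsum N (fun j => sin (INR j * th)) = 0.
Proof.
  intros Hper Hs.
  assert (Hend : forall f : R -> R, f (- (th / 2) + 2 * IZR m * PI) = f (- (th / 2)) ->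
      f (INR N * th - th / 2) = f (0 * th - th / 2)).
  { intros f Hf. replace (INR N * th - th / 2) with (- (th / 2) + 2 * IZR m * PI) by lra.
    rewrite Hf. f_equal; ring. }
  split; apply (Rmult_eq_reg_l (2 * sin (th / 2))); try (intro; apply Hs; lra);
    rewrite <- rsum_scal, Rmult_0_r.
  - rewrite (rsum_ext _ _ (fun j => sin (INR (S j) * th - th / 2) - sin (INR j * th - th / 2))).
    + rewrite (rsum_telescope N (fun j => sin (INR j * th - th / 2))).
      rewrite (Hend sin (sin_period_Z _ _)). simpl; ring.
    + intros j _. rewrite S_INR.
      replace ((INR j + 1) * th - th / 2) with (INR j * th + th / 2) by field.
      rewrite sin_plus, sin_minus. ring.
  - rewrite (rsum_ext _ _ (fun j => - cos (INR (S j) * th - th / 2) - - cos (INR j * th - th / 2))).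
    + rewrite (rsum_telescope N (fun j => - cos (INR j * th - th / 2))).
      rewrite (Hend cos (cos_period_Z _ _)). simpl; ring.
    + intros j _. rewrite S_INR.
      replace ((INR j + 1) * th - th / 2) with (INR j * th + th / 2) by field.
      rewrite cos_plus, cos_minus. ring.
Qed.

Definition dvd_ind (N : nat) (m : Z) : R := if Z.eqb (Z.modulo m (Z.of_nat N)) 0 then 1 else 0.

Lemma dvd_ind_nonneg N m : 0 <= dvd_ind N m.
Proof. unfold dvd_ind. destruct (_ =? _)%Z; lra. Qed.

Definition phase (N j : nat) (m : Z) : R := 2 * PI * INR j * IZR m / INR N.

Lemma phase_add N j a b : (0 < N)%nat -> phase N j (a + b) = phase N j a + phase N j b.
Proof. intros H. pose proof (lt_0_INR N H). unfold phase. rewrite plus_IZR. field. lra. Qed.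

Lemma phase_sub N j a b : (0 < N)%nat -> phase N j (a - b) = phase N j a - phase N j b.
Proof. intros H. pose proof (lt_0_INR N H). unfold phase. rewrite minus_IZR. field. lra. Qed.

Lemma character_sums N m : (0 < N)%nat ->
  rsum N (fun j => cos (phase N j m)) = INR N * dvd_ind N m /\
  rsum N (fun j => sin (phase N j m)) = 0.
Proof.
  intros HN. pose proof (lt_0_INR N HN) as HNR. pose proof PI_RGT_0.
  unfold dvd_ind. destruct (Z.eqb_spec (m mod Z.of_nat N) 0) as [E|E].
  - apply Z.mod_divide in E as [q ->]; [|lia].
    assert (Hint : forall j, phase N j (q * Z.of_nat N) = 0 + 2 * IZR (Z.of_nat j * q) * PI).
    { intros j. unfold phase. rewrite !mult_IZR, <- !INR_IZR_INZ. field. lra. }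
    split.
    + rewrite (rsum_ext _ _ (fun _ => 1)), rsum_const; [ring|].
      intros j _. rewrite Hint, cos_period_Z, cos_0; auto.
    + rewrite (rsum_ext _ _ (fun _ => 0)), rsum_const; [ring|].
      intros j _. rewrite Hint, sin_period_Z, sin_0; auto.
  - set (th := 2 * PI * IZR m / INR N).
    assert (Hs : sin (th / 2) <> 0).
    { intros [k Hk]%sin_eq_0_0. apply E, Z.mod_divide; [lia|]. exists k.
      apply eq_IZR. rewrite mult_IZR, <- INR_IZR_INZ.
      apply (Rmult_eq_reg_r (PI / INR N)); [|apply Rgt_not_eq, Rdiv_lt_0_compat; lra].
      transitivity (th / 2); [unfold th; field; lra|]. rewrite Hk. field. lra. }
    destruct (trig_sums_vanish N th m) as [H1 H2]; auto; [unfold th; field; lra|].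
    rewrite Rmult_0_r. split.
    + rewrite <- H1. apply rsum_ext; intros; unfold phase, th; f_equal; field; lra.
    + rewrite <- H2. apply rsum_ext; intros; unfold phase, th; f_equal; field; lra.
Qed.
(* Discrete Fourier transform X_j = Σ_k ω^{jk} w_k of w = wr + i wi, by real and
   imaginary parts; x(Nz) is dft_re N zr zi. *)
Definition cosk (N j k : nat) : R := cos (2 * PI * INR j * INR k / INR N).
Definition sink (N j k : nat) : R := sin (2 * PI * INR j * INR k / INR N).
Definition dft_re (N : nat) (wr wi : nat -> R) (j : nat) : R :=
  rsum N (fun k => cosk N j k * wr k - sink N j k * wi k).
Definition dft_im (N : nat) (wr wi : nat -> R) (j : nat) : R :=
  rsum N (fun k => sink N j k * wr k + cosk N j k * wi k).

Lemma xofz_dft_re N zr zi j : xofz N zr zi j = dft_re N zr zi j.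
Proof. reflexivity. Qed.

Definition cross_re (wr wi : nat -> R) (k l : nat) : R := wr k * wr l + wi k * wi l.
Definition cross_im (wr wi : nat -> R) (k l : nat) : R := wr k * wi l - wi k * wr l.
Definition dz (k l : nat) : Z := (Z.of_nat k - Z.of_nat l)%Z.
Definition pair_term (N : nat) (wr wi : nat -> R) (j k l : nat) : R :=
  cos (phase N j (dz k l)) * cross_re wr wi k l + sin (phase N j (dz k l)) * cross_im wr wi k l.

Lemma dft_abs2_expand N wr wi j : (0 < N)%nat ->
  dft_re N wr wi j ^ 2 + dft_im N wr wi j ^ 2 = rsum N (fun k => rsum N (fun l => pair_term N wr wi j k l)).
Proof.
  intros HN. pose proof (lt_0_INR N HN). unfold dft_re, dft_im. simpl.
  rewrite !Rmult_1_r, !rsum_mult, <- rsum_plus. apply rsum_ext; intros k _.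
  rewrite <- rsum_plus. apply rsum_ext; intros l _.
  unfold pair_term, cross_re, cross_im, cosk, sink.
  replace (phase N j (dz k l)) with (2 * PI * INR j * INR k / INR N - 2 * PI * INR j * INR l / INR N)
    by (unfold phase, dz; rewrite minus_IZR, <- !INR_IZR_INZ; field; lra).
  rewrite cos_minus, sin_minus. ring.
Qed.

Lemma dvd_ind_dz N k l : (k < N)%nat -> (l < N)%nat ->
  dvd_ind N (dz k l) = if Nat.eq_dec k l then 1 else 0.
Proof.
  intros Hk Hl. unfold dvd_ind, dz.
  destruct (Z.eqb_spec ((Z.of_nat k - Z.of_nat l) mod Z.of_nat N) 0) as [E|E];
    destruct (Nat.eq_dec k l) as [->|Hne]; auto.
  - apply Z.mod_divide in E as [q Hq]; [|lia]. exfalso.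
    destruct (Z.lt_trichotomy q 0) as [Hq0|[->|Hq0]]; nia.
  - rewrite Z.sub_diag, Z.mod_0_l in E; lia.
Qed.

Lemma pair_term_sum N wr wi k l : (0 < N)%nat ->
  rsum N (fun j => pair_term N wr wi j k l) = INR N * dvd_ind N (dz k l) * cross_re wr wi k l.
Proof.
  intros HN. destruct (character_sums N (dz k l) HN) as [Hc Hs]. unfold pair_term.
  rewrite rsum_plus.
  rewrite (rsum_ext _ _ (fun j => cross_re wr wi k l * cos (phase N j (dz k l)))) by (intros; ring).
  rewrite (rsum_ext _ (fun j => sin _ * _) (fun j => cross_im wr wi k l * sin (phase N j (dz k l))))
    by (intros; ring).
  rewrite !rsum_scal, Hc, Hs. ring.
Qed.

Lemma parseval N wr wi : (0 < N)%nat ->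
  rsum N (fun j => dft_re N wr wi j ^ 2 + dft_im N wr wi j ^ 2) = INR N * rsum N (cabs2 wr wi).
Proof.
  intros HN. rewrite (rsum_ext _ _ (fun j => rsum N (fun k => rsum N (fun l => pair_term N wr wi j k l))))
    by (intros; apply dft_abs2_expand; auto).
  rewrite rsum_swap, <- rsum_scal. apply rsum_ext; intros k Hk. rewrite rsum_swap.
  rewrite (rsum_ext _ _ (fun l => if Nat.eq_dec k l then INR N * cross_re wr wi l l else 0)).
  - rewrite rsum_delta by auto. unfold cross_re, cabs2. ring.
  - intros l Hl. rewrite pair_term_sum, dvd_ind_dz by auto. destruct (Nat.eq_dec k l); [subst|]; ring.
Qed.

(* For z in \widehat{R}^N the transform is real: the terms k and N-k of Im X_j cancel. *)
Lemma sink_reflect N j k : (0 < k)%nat -> (k < N)%nat -> sink N j (N - k) = - sink N j k.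
Proof.
  intros H1 H2. assert (0 < INR N) by (apply lt_0_INR; lia). unfold sink. rewrite minus_INR by lia.
  replace (2 * PI * INR j * (INR N - INR k) / INR N)
    with (- (2 * PI * INR j * INR k / INR N) + 2 * INR j * PI) by (field; lra).
  rewrite sin_period, sin_neg. reflexivity.
Qed.

Lemma cosk_reflect N j k : (0 < k)%nat -> (k < N)%nat -> cosk N j (N - k) = cosk N j k.
Proof.
  intros H1 H2. assert (0 < INR N) by (apply lt_0_INR; lia). unfold cosk. rewrite minus_INR by lia.
  replace (2 * PI * INR j * (INR N - INR k) / INR N)
    with (- (2 * PI * INR j * INR k / INR N) + 2 * INR j * PI) by (field; lra).
  rewrite cos_period, cos_neg. reflexivity.
Qed.

Lemma dft_im_hatR N zr zi j : (0 < N)%nat -> in_hatR N zr zi -> dft_im N zr zi j = 0.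
Proof.
  intros HN Hh. unfold dft_im. set (t := fun k => sink N j k * zr k + cosk N j k * zi k).
  enough (E : rsum N t = rsum N (fun k => - t k)) by (rewrite rsum_opp in E; lra).
  rewrite rsum_reflect by auto. apply rsum_ext; intros k Hk.
  destruct (Hh k Hk) as [Hr Hi]. unfold t. destruct k as [|k].
  - rewrite Nat.sub_0_r, Nat.Div0.mod_same in *.
    replace (zi 0%nat) with 0 by lra. unfold sink. simpl. rewrite Rmult_0_r, Rdiv_0_l, sin_0. ring.
  - rewrite Nat.mod_small in * by lia. rewrite sink_reflect, cosk_reflect, <- Hr by lia.
    replace (zi (N - S k)%nat) with (- zi (S k)) by lra. ring.
Qed.

Lemma dft_re_mod N wr wi m : (0 < N)%nat -> dft_re N wr wi (m mod N) = dft_re N wr wi m.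
Proof.
  intros HN. pose proof (lt_0_INR N HN).
  pose proof (Nat.div_mod m N ltac:(lia)) as Hm.
  set (q := (m / N)%nat) in *. set (r := (m mod N)%nat) in *.
  unfold dft_re. apply rsum_ext; intros k _. unfold cosk, sink.
  replace (2 * PI * INR m * INR k / INR N) with (2 * PI * INR r * INR k / INR N + 2 * INR (q * k) * PI)
    by (rewrite Hm, plus_INR, !mult_INR; field; lra).
  rewrite cos_period, sin_period. reflexivity.
Qed.

(* Discrete derivative: X_j - X_{j+1} is the transform of (1 - ω^k) w_k. *)
Definition step_angle (N k : nat) : R := 2 * PI * INR k / INR N.
Definition diff_re (N : nat) (wr wi : nat -> R) (k : nat) : R :=
  (1 - cos (step_angle N k)) * wr k + sin (step_angle N k) * wi k.
Definition diff_im (N : nat) (wr wi : nat -> R) (k : nat) : R :=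
  (1 - cos (step_angle N k)) * wi k - sin (step_angle N k) * wr k.

Lemma dft_difference N wr wi j : (0 < N)%nat ->
  dft_re N wr wi j - dft_re N wr wi (S j) = dft_re N (diff_re N wr wi) (diff_im N wr wi) j /\
  dft_im N wr wi j - dft_im N wr wi (S j) = dft_im N (diff_re N wr wi) (diff_im N wr wi) j.
Proof.
  intros HN. pose proof (lt_0_INR N HN).
  assert (Hc : forall k, cosk N (S j) k = cosk N j k * cos (step_angle N k) - sink N j k * sin (step_angle N k)).
  { intros k. unfold cosk, sink, step_angle. rewrite <- cos_plus, S_INR. f_equal. field. lra. }
  assert (Hs : forall k, sink N (S j) k = sink N j k * cos (step_angle N k) + cosk N j k * sin (step_angle N k)).
  { intros k. unfold cosk, sink, step_angle. rewrite <- sin_plus, S_INR. f_equal. field. lra. }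
  unfold dft_re, dft_im. rewrite <- !rsum_minus. split; apply rsum_ext; intros k _;
    rewrite Hc, Hs; unfold diff_re, diff_im; ring.
Qed.

Lemma diff_cabs2 N wr wi k : (0 < N)%nat ->
  cabs2 (diff_re N wr wi) (diff_im N wr wi) k = 4 * sin (INR k * PI / INR N) ^ 2 * cabs2 wr wi k.
Proof.
  intros HN. pose proof (lt_0_INR N HN).
  assert (Hcos : cos (step_angle N k) = 1 - 2 * sin (INR k * PI / INR N) * sin (INR k * PI / INR N)).
  { rewrite <- cos_2a_sin. unfold step_angle. f_equal. field. lra. }
  pose proof (sin2_cos2 (step_angle N k)) as Hpyth. rewrite !Rsqr_pow2 in Hpyth.
  unfold cabs2, diff_re, diff_im.
  transitivity (((1 - cos (step_angle N k)) ^ 2 + sin (step_angle N k) ^ 2) * (wr k ^ 2 + wi k ^ 2)); [ring|].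
  replace (sin (step_angle N k) ^ 2) with (1 - cos (step_angle N k) ^ 2) by lra. rewrite Hcos. ring.
Qed.

Lemma sum_x_sq N zr zi : (0 < N)%nat -> in_hatR N zr zi ->
  rsum N (fun j => xofz N zr zi j ^ 2) = INR N * rsum N (cabs2 zr zi).
Proof.
  intros HN Hh. rewrite <- parseval by auto. apply rsum_ext; intros j _.
  rewrite xofz_dft_re, dft_im_hatR by auto. ring.
Qed.

Lemma sum_dx_sq N zr zi : (0 < N)%nat -> in_hatR N zr zi ->
  rsum N (fun j => (xofz N zr zi j - xofz N zr zi ((S j) mod N)) ^ 2) =
  INR N * rsum N (fun k => 4 * sin (INR k * PI / INR N) ^ 2 * cabs2 zr zi k).
Proof.
  intros HN Hh.
  rewrite (rsum_ext _ (fun k => 4 * _ * _) (cabs2 (diff_re N zr zi) (diff_im N zr zi)))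
    by (intros; rewrite diff_cabs2; auto).
  rewrite <- parseval by auto. apply rsum_ext; intros j _.
  destruct (dft_difference N zr zi j HN) as [Hre Him].
  rewrite !xofz_dft_re, dft_re_mod, Hre, <- Him, !dft_im_hatR by auto. ring.
Qed.

Lemma quartic_energy_identity N g zr zi : (0 < N)%nat -> in_hatR N zr zi ->
  Gtilde g N zr zi - F0 g N zr zi = / (4 * INR N) * rsum N (fun j => xofz N zr zi j ^ 4).
Proof.
  intros HN Hh. pose proof (lt_0_INR N HN).
  unfold Gtilde, G_N, F_energy, F0, lam.
  rewrite sum_dx_sq, rsum_minus, (rsum_scal N (/4) (fun i => xofz N zr zi i ^ 4)),
    (rsum_scal N (/2) (fun i => xofz N zr zi i ^ 2)), sum_x_sq by auto.
  set (s2 := fun k => sin (INR k * PI / INR N) ^ 2 * cabs2 zr zi k).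
  rewrite (rsum_ext _ (fun k => 4 * _ * _) (fun k => 4 * s2 k)) by (intros; unfold s2; ring).
  rewrite (rsum_ext _ (fun k => (-1 + _) * _) (fun k => (-1) * cabs2 zr zi k + (2 * g) * s2 k))
    by (intros; unfold s2; ring).
  rewrite rsum_plus, !rsum_scal. field. lra.
Qed.
Definition sum4 (N : nat) (G : nat -> nat -> nat -> nat -> R) : R :=
  rsum N (fun a => rsum N (fun b => rsum N (fun c => rsum N (fun d => G a b c d)))).

Lemma sum4_le N G H :
  (forall a b c d, (a < N)%nat -> (b < N)%nat -> (c < N)%nat -> (d < N)%nat -> G a b c d <= H a b c d) ->
  sum4 N G <= sum4 N H.
Proof. intros Hle. unfold sum4. repeat (apply rsum_le; intros). auto. Qed.

Lemma sum4_plus N G H : sum4 N (fun a b c d => G a b c d + H a b c d) = sum4 N G + sum4 N H.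
Proof. unfold sum4. rewrite <- rsum_plus. repeat (apply rsum_ext; intros; rewrite <- rsum_plus). reflexivity. Qed.

Lemma sum4_scal N r G : sum4 N (fun a b c d => r * G a b c d) = r * sum4 N G.
Proof. unfold sum4. rewrite <- rsum_scal. repeat (apply rsum_ext; intros; rewrite <- rsum_scal). reflexivity. Qed.

Definition cmod (wr wi : nat -> R) (k : nat) : R := sqrt (cabs2 wr wi k).

Lemma cmod_nonneg wr wi k : 0 <= cmod wr wi k.
Proof. apply sqrt_pos. Qed.

Lemma cross_bound wr wi k l :
  Rabs (cross_re wr wi k l) <= cmod wr wi k * cmod wr wi l /\
  Rabs (cross_im wr wi k l) <= cmod wr wi k * cmod wr wi l.
Proof.
  assert (Hsq : (cmod wr wi k * cmod wr wi l)² = (cross_re wr wi k l)² + (cross_im wr wi k l)²).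
  { unfold cmod, cabs2. rewrite Rsqr_mult, !Rsqr_sqrt by nra. unfold cross_re, cross_im, Rsqr. ring. }
  assert (Hp : 0 <= cmod wr wi k * cmod wr wi l) by (apply Rmult_le_pos; apply cmod_nonneg).
  pose proof (Rle_0_sqr (cross_re wr wi k l)). pose proof (Rle_0_sqr (cross_im wr wi k l)).
  split; rewrite <- (Rabs_pos_eq _ Hp); apply Rsqr_le_abs_0; lra.
Qed.

Lemma pair_term_product_sum N wr wi a b c d : (0 < N)%nat ->
  rsum N (fun j => pair_term N wr wi j a c * pair_term N wr wi j b d) =
  / 2 * INR N *
    (dvd_ind N (dz a c + dz b d) * (cross_re wr wi a c * cross_re wr wi b d - cross_im wr wi a c * cross_im wr wi b d)
   + dvd_ind N (dz a c - dz b d) * (cross_re wr wi a c * cross_re wr wi b d + cross_im wr wi a c * cross_im wr wi b d)).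
Proof.
  intros HN. set (A := cross_re wr wi a c). set (B := cross_im wr wi a c).
  set (A' := cross_re wr wi b d). set (B' := cross_im wr wi b d).
  rewrite (rsum_ext _ _ (fun j =>
        / 2 * (A * A' - B * B') * cos (phase N j (dz a c + dz b d))
      + / 2 * (A * A' + B * B') * cos (phase N j (dz a c - dz b d))
      + / 2 * (A * B' + B * A') * sin (phase N j (dz a c + dz b d))
      + / 2 * (B * A' - A * B') * sin (phase N j (dz a c - dz b d)))).
  - rewrite !rsum_plus, !rsum_scal.
    destruct (character_sums N (dz a c + dz b d) HN) as [-> ->].
    destruct (character_sums N (dz a c - dz b d) HN) as [-> ->]. ring.
  - intros j _. unfold pair_term. fold A B A' B'. rewrite phase_add, phase_sub by auto.
    rewrite cos_plus, cos_minus, sin_plus, sin_minus. field.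
Qed.

Lemma half_combination_bound i1 i2 A B A' B' p p' : 0 <= i1 -> 0 <= i2 ->
  Rabs A <= p -> Rabs B <= p -> Rabs A' <= p' -> Rabs B' <= p' ->
  / 2 * (i1 * (A * A' - B * B') + i2 * (A * A' + B * B')) <= (i1 + i2) * (p * p').
Proof.
  intros Hi1 Hi2 HA HB HA' HB'.
  assert (Hprod : forall x y, Rabs x <= p -> Rabs y <= p' -> - (p * p') <= x * y <= p * p').
  { intros x y Hx Hy. assert (Hxy : Rabs (x * y) <= p * p')
      by (rewrite Rabs_mult; apply Rmult_le_compat; auto using Rabs_pos).
    pose proof (Rle_abs (x * y)). pose proof (Rle_abs (- (x * y))). rewrite Rabs_Ropp in *. lra. }
  destruct (Hprod A A' HA HA'). destruct (Hprod B B' HB HB').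
  assert (i1 * (A * A' - B * B') <= i1 * (2 * (p * p'))) by (apply Rmult_le_compat_l; lra).
  assert (i2 * (A * A' + B * B') <= i2 * (2 * (p * p'))) by (apply Rmult_le_compat_l; lra).
  lra.
Qed.

Definition fourth_kernel (N a b c d : nat) : R :=
  dvd_ind N (dz a c + dz b d) + dvd_ind N (dz a c - dz b d).

Lemma dft_fourth_moment N wr wi : (0 < N)%nat ->
  rsum N (fun j => (dft_re N wr wi j ^ 2 + dft_im N wr wi j ^ 2) ^ 2) <=
  INR N * sum4 N (fun a b c d =>
    fourth_kernel N a b c d * (cmod wr wi a * cmod wr wi b * cmod wr wi c * cmod wr wi d)).
Proof.
  intros HN. pose proof (lt_0_INR N HN).
  rewrite (rsum_ext _ _ (fun j => sum4 N (fun a b c d => pair_term N wr wi j a c * pair_term N wr wi j b d))).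
  2:{ intros j _. rewrite dft_abs2_expand by auto. unfold sum4. simpl. rewrite Rmult_1_r, rsum_mult.
      apply rsum_ext; intros a _. apply rsum_ext; intros b _. apply rsum_mult. }
  unfold sum4. rewrite rsum_swap, <- rsum_scal. apply rsum_le; intros a _.
  rewrite rsum_swap, <- rsum_scal. apply rsum_le; intros b _.
  rewrite rsum_swap, <- rsum_scal. apply rsum_le; intros c _.
  rewrite rsum_swap, <- rsum_scal. apply rsum_le; intros d _.
  rewrite pair_term_product_sum by auto. unfold fourth_kernel.
  destruct (cross_bound wr wi a c) as [Hac Hac']. destruct (cross_bound wr wi b d) as [Hbd Hbd'].
  pose proof (half_combination_bound _ _ _ _ _ _ _ _ (dvd_ind_nonneg N (dz a c + dz b d))
    (dvd_ind_nonneg N (dz a c - dz b d)) Hac Hac' Hbd Hbd') as Hcomb.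
  replace (cmod wr wi a * cmod wr wi b * cmod wr wi c * cmod wr wi d)
    with (cmod wr wi a * cmod wr wi c * (cmod wr wi b * cmod wr wi d)) by ring.
  rewrite (Rmult_comm (/ 2)), Rmult_assoc. apply Rmult_le_compat_l; lra.
Qed.

Lemma amgm4 p1 p2 p3 p4 : 0 <= p1 -> 0 <= p2 -> 0 <= p3 -> 0 <= p4 ->
  p1 * p2 * p3 * p4 <= ((p1 + p2 + p3 + p4) / 4) ^ 4.
Proof.
  intros. set (s := (p1 + p2) / 2). set (t := (p3 + p4) / 2).
  assert (p1 * p2 <= s * s) by (unfold s; pose proof (pow2_ge_0 (p1 - p2)); nra).
  assert (p3 * p4 <= t * t) by (unfold t; pose proof (pow2_ge_0 (p3 - p4)); nra).
  assert (s * t <= ((s + t) / 2) * ((s + t) / 2)) by (pose proof (pow2_ge_0 (s - t)); nra).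
  assert (0 <= s) by (unfold s; lra). assert (0 <= t) by (unfold t; lra).
  replace ((p1 + p2 + p3 + p4) / 4) with ((s + t) / 2) by (unfold s, t; field).
  assert (p1 * p2 * (p3 * p4) <= (s * s) * (t * t)) by (apply Rmult_le_compat; nra).
  replace ((s * s) * (t * t)) with ((s * t) * (s * t)) in * by ring.
  assert ((s * t) * (s * t) <= (((s + t) / 2) * ((s + t) / 2)) * (((s + t) / 2) * ((s + t) / 2)))
    by (apply Rmult_le_compat; nra).
  simpl. nra.
Qed.

Lemma pow4_le_reg X Y : 0 <= X -> 0 <= Y -> X ^ 4 <= Y ^ 4 -> X <= Y.
Proof.
  intros HX HY H. destruct (Rle_lt_dec X Y) as [|L]; auto.
  assert (Y * Y < X * X) by nra. assert ((Y * Y) * (Y * Y) < (X * X) * (X * X)) by nra. simpl in H. nra.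
Qed.

Lemma product_le_triple_mean Fa Fb Fc Fd ga gb gc gd :
  0 <= Fa -> 0 <= Fb -> 0 <= Fc -> 0 <= Fd -> 0 <= ga -> 0 <= gb -> 0 <= gc -> 0 <= gd ->
  ga ^ 3 = Fa ^ 4 -> gb ^ 3 = Fb ^ 4 -> gc ^ 3 = Fc ^ 4 -> gd ^ 3 = Fd ^ 4 ->
  Fa * Fb * Fc * Fd <= / 4 * (ga * gb * gc + ga * gb * gd + ga * gc * gd + gb * gc * gd).
Proof.
  intros HFa HFb HFc HFd Hga Hgb Hgc Hgd Ea Eb Ec Ed.
  assert (Hpow : (Fa * Fb * Fc * Fd) ^ 4 = (ga * gb * gc) * (ga * gb * gd) * (ga * gc * gd) * (gb * gc * gd)).
  { replace ((Fa * Fb * Fc * Fd) ^ 4) with (Fa ^ 4 * Fb ^ 4 * Fc ^ 4 * Fd ^ 4) by ring.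
    rewrite <- Ea, <- Eb, <- Ec, <- Ed. ring. }
  apply pow4_le_reg; [repeat apply Rmult_le_pos; auto| |].
  { apply Rmult_le_pos; [lra|]. repeat apply Rplus_le_le_0_compat; repeat apply Rmult_le_pos; auto. }
  rewrite Hpow. replace (/ 4 * _) with ((ga * gb * gc + ga * gb * gd + ga * gc * gd + gb * gc * gd) / 4) by field.
  apply amgm4; repeat apply Rmult_le_pos; auto.
Qed.

Lemma rsum_cube N g : rsum N (fun a => rsum N (fun b => rsum N (fun c => g a * g b * g c))) = rsum N g ^ 3.
Proof.
  replace (rsum N g ^ 3) with (rsum N g * (rsum N g * rsum N g)) by ring.
  rewrite Rmult_comm, <- rsum_scal. apply rsum_ext; intros a _.
  rewrite Rmult_comm, rsum_mult, <- rsum_scal. apply rsum_ext; intros b _.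
  rewrite <- rsum_scal. apply rsum_ext; intros; ring.
Qed.

Lemma rsum_weighted_le N (q : nat -> R) p : 0 <= p -> rsum N q <= 1 -> rsum N (fun x => q x * p) <= p.
Proof.
  intros Hp Hq. rewrite (rsum_ext _ _ (fun x => p * q x)) by (intros; ring). rewrite rsum_scal. nra.
Qed.

Section Young.
Variables (N : nat) (Q : nat -> nat -> nat -> nat -> R) (F g : nat -> R).
Hypothesis Q_nonneg : forall a b c d, (a < N)%nat -> (b < N)%nat -> (c < N)%nat -> (d < N)%nat ->
  0 <= Q a b c d.
Hypothesis Q_marg_d : forall a b c, (a < N)%nat -> (b < N)%nat -> (c < N)%nat -> rsum N (fun d => Q a b c d) <= 1.
Hypothesis Q_marg_c : forall a b d, (a < N)%nat -> (b < N)%nat -> (d < N)%nat -> rsum N (fun c => Q a b c d) <= 1.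
Hypothesis Q_marg_b : forall a c d, (a < N)%nat -> (c < N)%nat -> (d < N)%nat -> rsum N (fun b => Q a b c d) <= 1.
Hypothesis Q_marg_a : forall b c d, (b < N)%nat -> (c < N)%nat -> (d < N)%nat -> rsum N (fun a => Q a b c d) <= 1.
Hypothesis F_nonneg : forall k, (k < N)%nat -> 0 <= F k.
Hypothesis g_nonneg : forall k, (k < N)%nat -> 0 <= g k.
Hypothesis g_cube : forall k, (k < N)%nat -> g k ^ 3 = F k ^ 4.

Lemma young4 : sum4 N (fun a b c d => Q a b c d * (F a * F b * F c * F d)) <= rsum N g ^ 3.
Proof.
  assert (Hg3 : forall x y z, (x < N)%nat -> (y < N)%nat -> (z < N)%nat -> 0 <= g x * g y * g z)
    by (intros; repeat apply Rmult_le_pos; auto).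
  eapply Rle_trans.
  { apply (sum4_le N _ (fun a b c d => / 4 * (Q a b c d * (g a * g b * g c) + Q a b c d * (g a * g b * g d)
        + Q a b c d * (g a * g c * g d) + Q a b c d * (g b * g c * g d)))).
    intros a b c d Ha Hb Hc Hd.
    replace (/ 4 * _) with (Q a b c d * (/ 4 * (g a * g b * g c + g a * g b * g d + g a * g c * g d + g b * g c * g d)))
      by ring.
    apply Rmult_le_compat_l; auto. apply product_le_triple_mean; auto. }
  rewrite sum4_scal, !sum4_plus. unfold sum4.
  assert (T1 : rsum N (fun a => rsum N (fun b => rsum N (fun c => rsum N (fun d => Q a b c d * (g a * g b * g c)))))
      <= rsum N g ^ 3).
  { rewrite <- rsum_cube. repeat (apply rsum_le; intros). apply rsum_weighted_le; auto. }
  assert (T2 : rsum N (fun a => rsum N (fun b => rsum N (fun c => rsum N (fun d => Q a b c d * (g a * g b * g d)))))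
      <= rsum N g ^ 3).
  { rewrite <- rsum_cube. apply rsum_le; intros a Ha. apply rsum_le; intros b Hb.
    rewrite rsum_swap. apply rsum_le; intros d Hd. apply rsum_weighted_le; auto. }
  assert (T3 : rsum N (fun a => rsum N (fun b => rsum N (fun c => rsum N (fun d => Q a b c d * (g a * g c * g d)))))
      <= rsum N g ^ 3).
  { rewrite <- rsum_cube. apply rsum_le; intros a Ha.
    rewrite rsum_swap. apply rsum_le; intros c Hc.
    rewrite rsum_swap. apply rsum_le; intros d Hd. apply rsum_weighted_le; auto. }
  assert (T4 : rsum N (fun a => rsum N (fun b => rsum N (fun c => rsum N (fun d => Q a b c d * (g b * g c * g d)))))
      <= rsum N g ^ 3).
  { rewrite <- rsum_cube.
    rewrite rsum_swap. apply rsum_le; intros b Hb.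
    rewrite rsum_swap. apply rsum_le; intros c Hc.
    rewrite rsum_swap. apply rsum_le; intros d Hd. apply rsum_weighted_le; auto. }
  lra.
Qed.
End Young.

Lemma dvd_ind_affine_sum N (f : nat -> Z) e s : (0 < N)%nat -> (s = 1 \/ s = -1)%Z ->
  (forall d, f d = e + s * Z.of_nat d)%Z -> rsum N (fun d => dvd_ind N (f d)) <= 1.
Proof.
  intros HN Hs Hf. unfold dvd_ind. apply rsum_indicator_le_1. intros d d' Hd E1 E2.
  apply Z.eqb_eq, Z.mod_divide in E1 as [q1 H1]; [|lia].
  apply Z.eqb_eq, Z.mod_divide in E2 as [q2 H2]; [|lia].
  rewrite Hf in H1, H2.
  assert (Hx : (s * (Z.of_nat d' - Z.of_nat d) = (q2 - q1) * Z.of_nat N)%Z) by lia.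
  destruct (Z.lt_trichotomy (q2 - q1) 0) as [L|[L|L]]; destruct Hs; subst s; nia.
Qed.

(* The fourth-moment kernel is a sum of two kernels satisfying the hypotheses of young4. *)
Lemma fourth_kernel_young N F g : (0 < N)%nat ->
  (forall k, (k < N)%nat -> 0 <= F k) -> (forall k, (k < N)%nat -> 0 <= g k) ->
  (forall k, (k < N)%nat -> g k ^ 3 = F k ^ 4) ->
  sum4 N (fun a b c d => fourth_kernel N a b c d * (F a * F b * F c * F d)) <= 2 * rsum N g ^ 3.
Proof.
  intros HN HF Hg Hcube. unfold fourth_kernel.
  set (P := fun a b c d => F a * F b * F c * F d).
  replace (sum4 N _) with (sum4 N (fun a b c d => dvd_ind N (dz a c + dz b d) * P a b c d)
                           + sum4 N (fun a b c d => dvd_ind N (dz a c - dz b d) * P a b c d))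
    by (rewrite <- sum4_plus; unfold sum4, P; repeat (apply rsum_ext; intros); ring).
  assert (Hs1 : (1 = 1 \/ 1 = -1)%Z) by lia. assert (Hs2 : (-1 = 1 \/ -1 = -1)%Z) by lia.
  assert (Y1 : sum4 N (fun a b c d => dvd_ind N (dz a c + dz b d) * P a b c d) <= rsum N g ^ 3).
  { apply young4; auto; intros; [apply dvd_ind_nonneg| | | |].
    - apply (dvd_ind_affine_sum N _ (Z.of_nat a - Z.of_nat c + Z.of_nat b) (-1)); unfold dz; auto; lia.
    - apply (dvd_ind_affine_sum N _ (Z.of_nat a + Z.of_nat b - Z.of_nat d) (-1)); unfold dz; auto; lia.
    - apply (dvd_ind_affine_sum N _ (Z.of_nat a - Z.of_nat c - Z.of_nat d) 1); unfold dz; auto; lia.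
    - apply (dvd_ind_affine_sum N _ (Z.of_nat b - Z.of_nat c - Z.of_nat d) 1); unfold dz; auto; lia. }
  assert (Y2 : sum4 N (fun a b c d => dvd_ind N (dz a c - dz b d) * P a b c d) <= rsum N g ^ 3).
  { apply young4; auto; intros; [apply dvd_ind_nonneg| | | |].
    - apply (dvd_ind_affine_sum N _ (Z.of_nat a - Z.of_nat c - Z.of_nat b) 1); unfold dz; auto; lia.
    - apply (dvd_ind_affine_sum N _ (Z.of_nat a - Z.of_nat b + Z.of_nat d) (-1)); unfold dz; auto; lia.
    - apply (dvd_ind_affine_sum N _ (Z.of_nat a - Z.of_nat c + Z.of_nat d) (-1)); unfold dz; auto; lia.
    - apply (dvd_ind_affine_sum N _ (- Z.of_nat b - Z.of_nat c + Z.of_nat d) 1); unfold dz; auto; lia. }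
  lra.
Qed.

Lemma dft_re_fourth_power_bound N wr wi F g : (0 < N)%nat ->
  (forall k, (k < N)%nat -> cmod wr wi k <= F k) ->
  (forall k, (k < N)%nat -> 0 <= g k) -> (forall k, (k < N)%nat -> g k ^ 3 = F k ^ 4) ->
  rsum N (fun j => dft_re N wr wi j ^ 4) <= 2 * INR N * rsum N g ^ 3.
Proof.
  intros HN HF Hg Hcube. pose proof (lt_0_INR N HN).
  assert (HF0 : forall k, (k < N)%nat -> 0 <= F k)
    by (intros k Hk; apply Rle_trans with (cmod wr wi k); auto using cmod_nonneg).
  eapply Rle_trans.
  { apply (rsum_le _ _ (fun j => (dft_re N wr wi j ^ 2 + dft_im N wr wi j ^ 2) ^ 2)). intros j _.
    pose proof (pow2_ge_0 (dft_re N wr wi j)). pose proof (pow2_ge_0 (dft_im N wr wi j)).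
    replace (dft_re N wr wi j ^ 4) with ((dft_re N wr wi j ^ 2) ^ 2) by ring. nra. }
  eapply Rle_trans; [apply dft_fourth_moment; auto|].
  replace (2 * INR N * rsum N g ^ 3) with (INR N * (2 * rsum N g ^ 3)) by ring.
  apply Rmult_le_compat_l; [lra|].
  eapply Rle_trans; [|apply (fourth_kernel_young N F g); auto].
  apply sum4_le; intros a b c d Ha Hb Hc Hd. unfold fourth_kernel.
  pose proof (dvd_ind_nonneg N (dz a c + dz b d)). pose proof (dvd_ind_nonneg N (dz a c - dz b d)).
  apply Rmult_le_compat_l; [lra|].
  repeat apply Rmult_le_compat; auto using cmod_nonneg; repeat apply Rmult_le_pos; auto using cmod_nonneg.
Qed.

Lemma sin_ge_third a : 0 <= a -> a <= 2 -> a / 3 <= sin a.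
Proof.
  intros H1 H2. pose proof PI_RGT_0. pose proof PI2_3_2.
  destruct (SIN a H1) as [L _]; [lra|].
  unfold sin_lb, sin_approx, sin_term in L. simpl in L. unfold Rdiv in L.
  eapply Rle_trans; [|exact L].
  assert (a * a <= 4) by nra.
  assert (0 <= a ^ 5 * (/ 120 - a * a / 5040)) by (apply Rmult_le_pos; [apply pow_le; lra| lra]).
  simpl in *. nra.
Qed.

Lemma lam_reflect g N k : (k <= N)%nat -> (0 < N)%nat -> lam g N (N - k) = lam g N k.
Proof.
  intros H HN. pose proof (lt_0_INR N HN). unfold lam. rewrite minus_INR by auto.
  replace ((INR N - INR k) * PI / INR N) with (PI - INR k * PI / INR N) by (field; lra).
  rewrite sin_PI_x. reflexivity.
Qed.

(* Spectral gap: for γ = μ γ^N_1 and 1 <= m <= N/2, λ_{m,N} >= (μ-1) m^2 / 9.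
   Indeed λ_m = (μ sin^2(mπ/N) - sin^2(π/N)) / sin^2(π/N), sin(mπ/N) >= sin(π/N),
   and sin(mπ/N) >= mπ/(3N) >= m sin(π/N)/3. *)
Lemma lam_lower_bound mu N m : 1 < mu -> (3 <= N)%nat -> (1 <= m)%nat -> (2 * m <= N)%nat ->
  (mu - 1) * INR m ^ 2 / 9 <= lam (mu * gamma1 N) N m.
Proof.
  intros Hmu HN Hm1 Hm2.
  assert (HNr : 3 <= INR N) by (replace 3 with (INR 3) by (simpl; ring); apply le_INR; auto).
  assert (Hmr : 1 <= INR m) by (apply (le_INR 1); auto).
  assert (Hm2r : 2 * INR m <= INR N) by (rewrite <- (mult_INR 2); apply le_INR; auto).
  pose proof PI_RGT_0. pose proof PI_4. pose proof PI2_3_2.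
  set (x1 := PI / INR N). set (xm := INR m * PI / INR N).
  assert (Ex : xm = INR m * x1) by (unfold xm, x1; field; lra).
  assert (Hx1 : 0 < x1) by (unfold x1; apply Rdiv_lt_0_compat; lra).
  assert (Hxm : xm <= PI / 2).
  { unfold xm. apply (Rmult_le_reg_r (INR N)); [lra|]. unfold Rdiv. rewrite Rmult_assoc, Rinv_l by lra. nra. }
  assert (Hx1m : x1 <= xm) by (rewrite Ex; nra).
  set (s1 := sin x1). set (sm := sin xm).
  assert (Hs1 : 0 < s1) by (apply sin_gt_0; lra).
  assert (Hs1x : s1 < x1) by (apply sin_lt_x; lra).
  assert (Hsm1 : s1 <= sm) by (apply sin_incr_1; lra).
  assert (Hsmx : xm / 3 <= sm) by (apply sin_ge_third; lra).
  assert (Hratio : INR m ^ 2 / 9 * s1 ^ 2 <= sm ^ 2).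
  { assert (INR m ^ 2 / 9 * s1 ^ 2 <= INR m ^ 2 / 9 * x1 ^ 2) by (apply Rmult_le_compat_l; nra).
    assert (INR m ^ 2 / 9 * x1 ^ 2 = (xm / 3) ^ 2) by (rewrite Ex; field).
    assert (0 <= xm / 3) by (rewrite Ex; nra).
    assert ((xm / 3) ^ 2 <= sm ^ 2) by nra. lra. }
  unfold lam, gamma1. fold x1 s1. change (sin (INR m * PI / INR N)) with sm.
  replace (-1 + 2 * (mu * / (2 * s1 ^ 2)) * sm ^ 2) with ((- s1 ^ 2 + mu * sm ^ 2) / s1 ^ 2) by (field; lra).
  assert (Key : (mu - 1) * INR m ^ 2 / 9 * s1 ^ 2 <= - s1 ^ 2 + mu * sm ^ 2).
  { assert ((mu - 1) * (INR m ^ 2 / 9 * s1 ^ 2) <= (mu - 1) * sm ^ 2) by (apply Rmult_le_compat_l; lra). nra. }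
  apply (Rmult_le_reg_r (s1 ^ 2)); [nra|].
  unfold Rdiv at 2. rewrite Rmult_assoc, Rinv_l by nra. lra.
Qed.

(* The radius of C_δ at mode k, divided by δ: a_k = r_{k,N} / sqrt |λ_{k,N}|. *)
Definition weight (rho : nat -> R) (mu : R) (N k : nat) : R :=
  rkN rho N k / sqrt (Rabs (lam (mu * gamma1 N) N k)).

Definition K_term (rho : nat -> R) (m : nat) : R := Rpower (rho m / INR m) (4 / 3).

(* Rpower x p = exp (p ln x) is always positive. *)
Lemma Rpower_pos x p : 0 < Rpower x p.
Proof. apply exp_pos. Qed.

(* The zero mode: r_{0,N} = 1 and λ_{0,N} = -1. *)
Lemma weight_zero rho mu N : weight rho mu N 0 = 1.
Proof.
  unfold weight, rkN, lam. simpl. rewrite Rmult_0_l, Rdiv_0_l, sin_0.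
  replace (-1 + 2 * (mu * gamma1 N) * 0 ^ 2) with (-1) by ring.
  rewrite Rabs_left by lra. match goal with |- context [sqrt ?x] => replace x with 1 by ring end.
  rewrite sqrt_1. field.
Qed.

(* By the symmetry r_{k,N} = r_{N-k,N}, λ_{k,N} = λ_{N-k,N}, every mode 0 < k < N has
   the weight of a mode m <= N/2. *)
Lemma weight_low_mode rho mu N k : (0 < k < N)%nat ->
  exists m, (m = k \/ m = N - k)%nat /\ (1 <= m)%nat /\ (2 * m <= N)%nat /\
    weight rho mu N k = rho m / sqrt (Rabs (lam (mu * gamma1 N) N m)).
Proof.
  intros Hk. pose proof (Nat.div_mod N 2 ltac:(lia)). pose proof (Nat.mod_upper_bound N 2 ltac:(lia)).
  unfold weight, rkN. replace (Nat.eqb k 0) with false by (symmetry; apply Nat.eqb_neq; lia).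
  destruct (Nat.leb_spec k (N / 2)).
  - exists k. repeat split; auto; lia.
  - exists (N - k)%nat. rewrite lam_reflect by lia. repeat split; auto; lia.
Qed.

Lemma low_mode_weight_bound mu rho N m : 1 < mu -> (3 <= N)%nat -> (1 <= m)%nat -> (2 * m <= N)%nat ->
  0 < rho m ->
  0 < rho m / sqrt (Rabs (lam (mu * gamma1 N) N m)) /\
  Rpower (rho m / sqrt (Rabs (lam (mu * gamma1 N) N m))) (4 / 3)
    <= Rpower (3 / sqrt (mu - 1)) (4 / 3) * K_term rho m.
Proof.
  intros Hmu HN Hm1 Hm2 Hr. pose proof (lam_lower_bound mu N m Hmu HN Hm1 Hm2) as HL.
  assert (Hmr : 1 <= INR m) by (apply (le_INR 1); auto).
  set (L := lam (mu * gamma1 N) N m) in *.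
  assert (Hq : 0 < sqrt (mu - 1)) by (apply sqrt_lt_R0; lra).
  assert (Hlow : 0 < sqrt (mu - 1) * INR m / 3) by (apply Rdiv_lt_0_compat; [apply Rmult_lt_0_compat|]; lra).
  assert (Hsqrt : sqrt (mu - 1) * INR m / 3 <= sqrt (Rabs L)).
  { rewrite Rabs_pos_eq by nra.
    replace (sqrt (mu - 1) * INR m / 3) with (sqrt ((mu - 1) * INR m ^ 2 / 9)).
    - apply sqrt_le_1_alt. auto.
    - replace ((mu - 1) * INR m ^ 2 / 9) with ((mu - 1) * (INR m / 3) ^ 2) by field.
      rewrite sqrt_mult_alt, sqrt_pow2 by lra. field. }
  assert (Hpos : 0 < rho m / sqrt (Rabs L)) by (apply Rdiv_lt_0_compat; lra).
  split; auto. unfold K_term. rewrite Rpower_mult_distr by (apply Rdiv_lt_0_compat; lra).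
  apply Rle_Rpower_l; [lra|]. split; auto.
  replace (3 / sqrt (mu - 1) * (rho m / INR m)) with (rho m / (sqrt (mu - 1) * INR m / 3)) by (field; lra).
  unfold Rdiv at 1 2. apply Rmult_le_compat_l; [lra|]. apply Rinv_le_contravar; auto.
Qed.

Lemma weight_bound mu rho N k : 1 < mu -> (forall k, (1 <= k)%nat -> 0 < rho k) ->
  (3 <= N)%nat -> (0 < k < N)%nat ->
  0 < weight rho mu N k /\
  Rpower (weight rho mu N k) (4 / 3) <= Rpower (3 / sqrt (mu - 1)) (4 / 3) * (K_term rho k + K_term rho (N - k)).
Proof.
  intros Hmu Hpos HN Hk.
  destruct (weight_low_mode rho mu N k Hk) as (m & Hm & Hm1 & Hm2 & ->).
  destruct (low_mode_weight_bound mu rho N m Hmu HN Hm1 Hm2 (Hpos m Hm1)) as [Hw HB].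
  split; auto. pose proof (Rpower_pos (3 / sqrt (mu - 1)) (4 / 3)).
  pose proof (Rpower_pos (rho k / INR k) (4 / 3)). pose proof (Rpower_pos (rho (N - k)%nat / INR (N - k)) (4 / 3)).
  unfold K_term in *. destruct Hm as [-> | ->]; nra.
Qed.

(* Uniform control of Σ_k a_k^{4/3} by 1 + 2 (3/sqrt(μ-1))^{4/3} K_{4/3}^{4/3}. *)
Lemma weight_sum_bound mu rho : 1 < mu -> (forall k, (1 <= k)%nat -> 0 < rho k) -> K_finite (4 / 3) rho ->
  exists T, forall N, (3 <= N)%nat -> rsum N (fun k => Rpower (weight rho mu N k) (4 / 3)) <= T.
Proof.
  intros Hmu Hpos [l Hl].
  set (u := fun n => sum_f_R0 (fun k => K_term rho (S k)) n) in *.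
  assert (Hul : forall n, u n <= l).
  { apply growing_ineq; auto. intros n. unfold u. rewrite tech5. pose proof (Rpower_pos (rho (S (S n)) / INR (S (S n))) (4 / 3)).
    unfold K_term. lra. }
  pose proof (Rpower_pos (3 / sqrt (mu - 1)) (4 / 3)). set (C := Rpower (3 / sqrt (mu - 1)) (4 / 3)) in *.
  exists (1 + C * (2 * l)). intros N HN. destruct N as [|M]; [lia|].
  rewrite rsum_shift, weight_zero.
  replace (Rpower 1 (4 / 3)) with 1 by (unfold Rpower; rewrite ln_1, Rmult_0_r, exp_0; reflexivity).
  apply Rplus_le_compat_l. eapply Rle_trans.
  { apply (rsum_le _ _ (fun k => C * (K_term rho (S k) + K_term rho (S M - S k)))). intros k Hk.
    apply weight_bound; auto; lia. }
  rewrite rsum_scal, rsum_plus. apply Rmult_le_compat_l; [lra|].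
  assert (Hrev : rsum M (fun k => K_term rho (S M - S k)) = rsum M (fun k => K_term rho (S k))).
  { rewrite rsum_rev. apply rsum_ext; intros k Hk. f_equal. lia. }
  rewrite Hrev. destruct M as [|M']; [lia|]. rewrite rsum_sum_f_R0. pose proof (Hul M'). unfold u in *. lra.
Qed.

Lemma Rpower_four_thirds_cube x : 0 < x -> Rpower x (4 / 3) ^ 3 = x ^ 4.
Proof.
  intros Hx. rewrite <- Rpower_pow by apply Rpower_pos.
  rewrite Rpower_mult, <- Rpower_pow by auto. f_equal. simpl. field.
Qed.

(* On C_δ, |z_k| <= δ a_k, so the quartic sum is at most 2N (δ^{4/3} Σ_k a_k^{4/3})^3. *)
Lemma Cdelta_quartic_bound mu rho N delta zr zi : 1 < mu -> (forall k, (1 <= k)%nat -> 0 < rho k) ->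
  (3 <= N)%nat -> 0 < delta -> in_Cdelta (mu * gamma1 N) rho N delta zr zi ->
  rsum N (fun j => xofz N zr zi j ^ 4)
    <= 2 * INR N * (Rpower delta (4 / 3) * rsum N (fun k => Rpower (weight rho mu N k) (4 / 3))) ^ 3.
Proof.
  intros Hmu Hpos HN Hd [_ Hrad].
  assert (Hw : forall k, (k < N)%nat -> 0 < weight rho mu N k).
  { intros [|k] Hk; [rewrite weight_zero; lra|]. apply weight_bound; auto; lia. }
  replace (Rpower delta (4 / 3) * _) with (rsum N (fun k => Rpower (delta * weight rho mu N k) (4 / 3))).
  2:{ rewrite <- rsum_scal. apply rsum_ext; intros k Hk. symmetry. apply Rpower_mult_distr; auto. }
  apply (dft_re_fourth_power_bound N zr zi (fun k => delta * weight rho mu N k)); [lia| | |].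
  - intros k Hk. unfold cmod, weight. unfold Rdiv in *. rewrite <- Rmult_assoc. apply Hrad; auto.
  - intros k _. apply Rlt_le, Rpower_pos.
  - intros k Hk. apply Rpower_four_thirds_cube. apply Rmult_lt_0_compat; auto.
Qed.

(* Main result, with A_1 = T^3/2; the bound in fact holds for every δ > 0 and does not
   use the monotonicity of ρ. *)
Theorem lemma4p5 (mu : R) (rho : nat -> R)
  (Hmu : 1 < mu)
  (Hpos : forall k : nat, (1 <= k)%nat -> 0 < rho k)
  (Hincr : forall k : nat, (1 <= k)%nat -> rho k <= rho (S k))
  (HK : K_finite (4 / 3) rho) :
  exists A1 delta0 : R, 0 < delta0 /\
    forall (N : nat) (delta : R) (zr zi : nat -> R),
      (3 <= N)%nat -> 0 < delta -> delta < delta0 ->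
      in_Cdelta (mu * gamma1 N) rho N delta zr zi ->
      Rabs (Gtilde (mu * gamma1 N) N zr zi - F0 (mu * gamma1 N) N zr zi) <= A1 * delta ^ 4.
Proof.
  destruct (weight_sum_bound mu rho Hmu Hpos HK) as [T HT].
  exists (T ^ 3 / 2), 1. split; [lra|].
  intros N delta zr zi HN Hd _ HC.
  pose proof (lt_0_INR N ltac:(lia)) as HNr.
  pose proof (Cdelta_quartic_bound mu rho N delta zr zi Hmu Hpos HN Hd HC) as Hquartic.
  set (S := rsum N (fun k => Rpower (weight rho mu N k) (4 / 3))) in Hquartic.
  assert (HS : 0 <= S <= T) by (split; [apply rsum_nonneg; intros; apply Rlt_le, Rpower_pos | apply HT; auto]).
  assert (Hcube : (Rpower delta (4 / 3) * S) ^ 3 <= delta ^ 4 * T ^ 3).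
  { rewrite Rpow_mult_distr, Rpower_four_thirds_cube by auto.
    apply Rmult_le_compat_l; [apply pow_le; lra | apply pow_incr; lra]. }
  assert (Hx4 : 0 <= rsum N (fun j => xofz N zr zi j ^ 4))
    by (apply rsum_nonneg; intros j _; replace (xofz N zr zi j ^ 4) with ((xofz N zr zi j ^ 2) ^ 2) by ring;
        apply pow2_ge_0).
  rewrite quartic_energy_identity by (lia || exact (proj1 HC)).
  rewrite Rabs_pos_eq by (apply Rmult_le_pos; [apply Rlt_le, Rinv_0_lt_compat; lra | auto]).
  apply Rle_trans with (/ (4 * INR N) * (2 * INR N * (Rpower delta (4 / 3) * S) ^ 3)).
  - apply Rmult_le_compat_l; [apply Rlt_le, Rinv_0_lt_compat; lra | auto].
  - replace (/ (4 * INR N) * _) with ((Rpower delta (4 / 3) * S) ^ 3 / 2) by (field; lra). lra.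
Qed.
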